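(* For every pointed pseudotopological space $(X,x_0)$, the set $\pi_0^{\mathrm{ps}}\Omega^{\mathrm{ps}}(X,x_0)$ with multiplication $[l][l']=[l\cdot l']$ and inversion $[l]^{-1}=[l^{-1}]$ is a pseudotopological group; and for every pointed epitopological space $(X,x_0)$, $\pi_0^{\mathrm{epi}}\Omega^{\mathrm{epi}}(X,x_0)$ with the analogous operations is an epitopological group.
   Context: For a set $X$, $U(X)$ is the set of ultrafilters on $X$, $\dot x$ the principal ultrafilter at $x$; $f_*\mathscr F=\{S:f^{-1}(S)\in\mathscr F\}$. A pseudotopological space is a set $X$ with $u\subset U(X)\times X$ containing all $(\dot x,x)$; write $\mathscr U\to x$; for a filter, $\mathscr F\to x$ means every finer ultrafilter converges to $x$. Continuous maps: $\mathscr U\to x\Rightarrow f_*\mathscr U\to f(x)$. Subspaces and products carry initial structures; the final structure for $q\colon X\to Z$: $\mathscr U\to z$ iff $\mathscr U=\dot z$ or $\mathscr U=q_*\mathscr V$, $z=q(x)$ with $\mathscr V\to x$. Topological spaces are regarded as pseudotopological via ultrafilter convergence. For pseudotopological $X,Y$, $Y^X$ is the set of continuous maps with: a filter $\mathscr F\to f$ iff for every filter $\mathscr G\to x$, $\mathrm{ev}_*(\mathscr F\times\mathscr G)\to f(x)$. A pseudotopological space is epitopological if its structure is initial w.r.t. some family of maps $X\to Z_j^{Y_j}$, $Y_j,Z_j$ topological; these form the cartesian closed category $\mathsf{EpiTop}$ with the same products and subspaces. $\Omega^{\mathrm{ps}}(X,x_0)$: loops $l\colon[0,1]\to X$ with $l(0)=l(1)=x_0$,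 subspace of $X^{[0,1]}$; $\Omega^{\mathrm{epi}}$: same, in $\mathsf{EpiTop}$. Concatenation $(l\cdot l')(t)=l(2t)$ for $t\le1/2$, $l'(2t-1)$ for $t\ge 1/2$; inversion $l^{-1}(t)=l(1-t)$. $\pi_0^{\mathrm{ps}}A$: set of path components of $A$ (paths being continuous maps from $[0,1]$) with the final pseudotopology w.r.t. the projection; $\pi_0^{\mathrm{epi}}A$: path components with the smallest epitopological structure making the projection continuous. A pseudotopological (resp. epitopological) group is a group with a pseudotopological (resp. epitopological) structure making inversion and multiplication (on the product) continuous. *)

From HB Require Import structures.
From mathcomp Require Import all_boot all_order all_algebra.
From mathcomp Require Import boolp classical_sets reals topology.
From mathcomp Require Import Rstruct Rstruct_topology.

Set Implicit Arguments.
Unset Strict Implicit.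
Unset Printing Implicit Defensive.
Import Order.TTheory GRing.Theory Num.Theory.
Local Open Scope classical_set_scope.
Local Open Scope ring_scope.

Definition is_filter {X : Type} (F : set (set X)) : Prop :=
  F setT /\ (forall A B, F A -> F B -> F (A `&` B)) /\
  (forall A B, A `<=` B -> F A -> F B).

Definition is_ultrafilter {X : Type} (U : set (set X)) : Prop :=
  is_filter U /\ ~ U set0 /\ (forall A, U A \/ U (~` A)).

Definition principal {X : Type} (x : X) : set (set X) := fun A => A x.

Definition pushforward {X Y : Type} (f : X -> Y) (F : set (set X)) : set (set Y) :=
  fun S => F (f @^-1` S).

Definition prod_filter {X Y : Type} (F : set (set X)) (G : set (set Y))
  : set (set (X * Y)) :=
  fun S => exists A B, F A /\ G B /\ A `*` B `<=` S.

Record pstop := PsTop { ps_car :> Type ; ps_conv : set (set ps_car) -> ps_car -> Prop }.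

Definition pseudotopological (X : pstop) : Prop :=
  (forall U x, @ps_conv X U x -> is_ultrafilter U) /\
  (forall x : X, @ps_conv X (principal x) x).

Definition fconv (X : pstop) (F : set (set X)) (x : X) : Prop :=
  forall U, is_ultrafilter U -> F `<=` U -> @ps_conv X U x.

Definition pcont (X Y : pstop) (f : X -> Y) : Prop :=
  forall (U : set (set X)) (x : X), @ps_conv X U x -> @ps_conv Y (pushforward f U) (f x).

Definition ps_of_top (T : topologicalType) : pstop :=
  @PsTop T (fun U x => is_ultrafilter U /\ nbhs x `<=` U).

Definition sub_space (X : pstop) (P : set X) : pstop :=
  @PsTop {x : X | P x}
    (fun U x => is_ultrafilter U /\ @ps_conv X (pushforward (@proj1_sig _ _) U) (proj1_sig x)).

Definition prod_space (X Y : pstop) : pstop :=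
  @PsTop (X * Y)%type
    (fun U p => is_ultrafilter U /\ @ps_conv X (pushforward fst U) p.1 /\
                @ps_conv Y (pushforward snd U) p.2).

Definition cmap (X Y : pstop) := {f : X -> Y | pcont f}.

Definition evalc (X Y : pstop) (p : cmap X Y * X) : Y := proj1_sig p.1 p.2.

Definition fun_space (X Y : pstop) : pstop :=
  @PsTop (cmap X Y)
    (fun F f => is_ultrafilter F /\
       forall (G : set (set X)) (x : X), is_filter G -> fconv G x ->
         fconv (pushforward (@evalc X Y) (prod_filter F G)) (proj1_sig f x)).

Definition epitopological (X : pstop) : Prop :=
  exists (J : Type) (Y Z : J -> topologicalType)
         (f : forall j, X -> fun_space (ps_of_top (Y j)) (ps_of_top (Z j))),
    forall (U : set (set X)) (x : X),
      @ps_conv X U x <->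
      (is_ultrafilter U /\ forall j, @ps_conv _ (pushforward (f j) U) (f j x)).

Definition Rl := Rdefinitions.R.

Definition I01 : pstop :=
  sub_space (X := ps_of_top Rl) (fun t : Rl => 0 <= t <= 1).

Lemma clamp_in (t : Rl) : 0 <= Num.max 0 (Num.min 1 t) <= 1.
Proof.
apply/andP; split; first by rewrite le_max lexx.
by rewrite ge_max ler01 ge_min lexx.
Qed.

Definition clampI (t : Rl) : I01 := exist _ (Num.max 0 (Num.min 1 t)) (clamp_in t).

Definition I0 : I01 := clampI 0.
Definition I1 : I01 := clampI 1.

Definition concat (X : Type) (l l' : I01 -> X) (t : I01) : X :=
  if proj1_sig t <= 2^-1 then l (clampI (2 * proj1_sig t))
  else l' (clampI (2 * proj1_sig t - 1)).

Definition reverse (X : Type) (l : I01 -> X) (t : I01) : X :=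
  l (clampI (1 - proj1_sig t)).

Definition loop_space (X : pstop) (x0 : X) : pstop :=
  sub_space (X := fun_space I01 X)
    (fun l => proj1_sig l I0 = x0 /\ proj1_sig l I1 = x0).

Definition loop_fun (X : pstop) (x0 : X) (l : loop_space x0) : I01 -> X :=
  proj1_sig (proj1_sig l).

Definition path_rel (A : pstop) (a b : A) : Prop :=
  exists p : cmap I01 A, proj1_sig p I0 = a /\ proj1_sig p I1 = b.

Definition pcomp (A : pstop) (a : A) : set A := path_rel a.

Definition pi0car (A : pstop) := {C : set A | exists a, C = pcomp a}.

Definition pi0_proj (A : pstop) (a : A) : pi0car A :=
  exist _ (pcomp a) (ex_intro _ a erefl).

(* final pseudotopology w.r.t. the projection *)
Definition pi0_ps (A : pstop) : pstop :=
  @PsTop (pi0car A)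
    (fun U z => U = principal z \/
       exists (V : set (set A)) (x : A),
         @ps_conv A V x /\ z = pi0_proj x /\ U = pushforward (@pi0_proj A) V).

Definition pi0_epi (A : pstop) : pstop :=
  @PsTop (pi0car A)
    (fun U z => forall c : set (set (pi0car A)) -> pi0car A -> Prop,
       pseudotopological (@PsTop (pi0car A) c) ->
       epitopological (@PsTop (pi0car A) c) ->
       pcont (X := A) (Y := @PsTop (pi0car A) c) (@pi0_proj A) ->
       c U z).

Definition ps_group (G : pstop) (mul : G -> G -> G) (inv : G -> G) (e : G) : Prop :=
  pseudotopological G /\
  (forall a b c, mul a (mul b c) = mul (mul a b) c) /\
  (forall a, mul e a = a /\ mul a e = a) /\
  (forall a, mul (inv a) a = e /\ mul a (inv a) = e) /\
  pcont (X := prod_space G G) (Y := G) (fun p => mul p.1 p.2) /\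
  pcont (X := G) (Y := G) inv.

Definition epi_group (G : pstop) (mul : G -> G -> G) (inv : G -> G) (e : G) : Prop :=
  ps_group mul inv e /\ epitopological G.

Definition loop_ops_ok (X : pstop) (x0 : X)
  (mul : pi0car (loop_space x0) -> pi0car (loop_space x0) -> pi0car (loop_space x0))
  (inv : pi0car (loop_space x0) -> pi0car (loop_space x0)) : Prop :=
  (forall l l' : loop_space x0, exists m : loop_space x0,
      loop_fun m = concat (loop_fun l) (loop_fun l')) /\
  (forall l : loop_space x0, exists m : loop_space x0,
      loop_fun m = reverse (loop_fun l)) /\
  (forall l l' m : loop_space x0, loop_fun m = concat (loop_fun l) (loop_fun l') ->
      mul (pi0_proj l) (pi0_proj l') = pi0_proj m) /\
  (forall l m : loop_space x0, loop_fun m = reverse (loop_fun l) ->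
      inv (pi0_proj l) = pi0_proj m).

(* Concatenation and reversal of loops are continuous on Ω × Ω and on Ω: by currying, a map
   into Ω is continuous as soon as the corresponding map on S × [0,1] is, and there
   concatenation is pasted from two continuous pieces along t <= 1/2.  The group laws hold
   up to paths in Ω, namely straight-line homotopies between Lipschitz reparametrisations
   of [0,1], so [l][l'] = [l·l'] and [l]^-1 = [l^-1] make π0 Ω a group.
   For π0^ps, convergent ultrafilters on π0 Ω × π0 Ω lift to Ω × Ω, so the operations are
   continuous because concatenation and reversal are.
   For π0^epi, a map out of π0^epi Ω into an epitopological space is continuous as soon as
   its composite with the projection is.  As Z^Y is epitopological whenever Z is (test Y
   against the topologies in which a single ultrafilter converges), currying concatenation
   gives a continuous b ↦ (l ↦ [l] b) into (π0^epi Ω)^Ω; uncurrying and currying again gives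
   a continuous a ↦ (b ↦ a b) into (π0^epi Ω)^(π0^epi Ω), whose uncurried form is the
   multiplication. *)

From Pilot Require Import Defs.
From HB Require Import structures.
From mathcomp Require Import all_boot all_order all_algebra.
From mathcomp Require Import boolp classical_sets reals topology.
From mathcomp Require Import Rstruct Rstruct_topology normedtype.
From mathcomp Require Import ring lra.

Set Implicit Arguments.
Unset Strict Implicit.
Unset Printing Implicit Defensive.
Import Order.TTheory GRing.Theory Num.Theory numFieldNormedType.Exports.
Local Open Scope classical_set_scope.
Local Open Scope ring_scope.

Lemma sig_inj (T : Type) (P : T -> Prop) (x y : {z | P z}) :
  proj1_sig x = proj1_sig y -> x = y.
Proof. by case: x => x px; case: y => y py /= exy; exact: eq_exist. Qed.

(** * Filters and ultrafilters *)

Section Filters.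
Variable X : Type.
Implicit Types (F U : set (set X)) (A B : set X).

Lemma is_filterT F : is_filter F -> F setT.
Proof. by case. Qed.

Lemma is_filterI F A B : is_filter F -> F A -> F B -> F (A `&` B).
Proof. by move=> [_ [h _]]; exact: h. Qed.

Lemma is_filterS F A B : is_filter F -> A `<=` B -> F A -> F B.
Proof. by move=> [_ [_ h]]; exact: h. Qed.

Lemma ultra_filter U : is_ultrafilter U -> is_filter U.
Proof. by case. Qed.

Lemma ultra_neq0 U : is_ultrafilter U -> ~ U set0.
Proof. by move=> [_ []]. Qed.

Lemma ultraVC U A : is_ultrafilter U -> U A \/ U (~` A).
Proof. by move=> [_ [_ h]]; exact: h. Qed.

Lemma ultra_inhabited U A : is_ultrafilter U -> U A -> exists x, A x.
Proof.
move=> hU hA; apply: contrapT => hn; apply: (ultra_neq0 hU).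
by apply: is_filterS (ultra_filter hU) _ hA => x Ax; apply: hn; exists x.
Qed.

Lemma ultra_maximal U F : is_ultrafilter U -> is_filter F -> ~ F set0 ->
  U `<=` F -> F = U.
Proof.
move=> hU hF hF0 sUF; apply/funext => A; apply/propext; split=> [hA|]; last exact: sUF.
case: (ultraVC A hU) => // hC; exfalso; apply: hF0.
by apply: is_filterS hF _ (is_filterI hF hA (sUF _ hC)) => x [].
Qed.

Lemma ultra_extend F : is_filter F -> ~ F set0 ->
  exists U, is_ultrafilter U /\ F `<=` U.
Proof.
move=> hF hF0.
have PF : ProperFilter F.
  apply: Build_ProperFilter => //; split.
  - exact: is_filterT.
  - by move=> A B; apply: is_filterI.
  - by move=> A B; apply: is_filterS.
have [U [UU sFU]] := ultraFilterLemma PF.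
exists U; split => //; split; last split.
- by split; [exact: filterT | split=> A B; [exact: filterI | exact: filterS]].
- exact: filter_not_empty.
- by move=> A; exact: in_ultra_setVsetC.
Qed.

Lemma principal_ultra (x : X) : is_ultrafilter (principal x).
Proof.
split; [split; [by [] | split] | split].
- by move=> A B hA hB; split.
- by move=> A B sAB /sAB.
- by [].
- by move=> A; rewrite /principal; case: (pselect (A x)) => h; [left | right].
Qed.

Lemma ultra_principal U (x : X) : is_ultrafilter U -> U [set x] -> U = principal x.
Proof.
move=> hU hx; apply/esym/(ultra_maximal hU (ultra_filter (principal_ultra x))).
  exact: ultra_neq0 (principal_ultra x).
move=> A hA; have [y [Ay yx]] := ultra_inhabited hU (is_filterI (ultra_filter hU) hA hx).
by rewrite /principal -yx.
Qed.

End Filters.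

Section Pushforward.
Variables (X Y : Type) (f : X -> Y).
Implicit Types (F U : set (set X)).

Lemma push_filter F : is_filter F -> is_filter (pushforward f F).
Proof.
move=> hF; split; first by apply: (is_filterS hF _ (is_filterT hF)).
by split=> [A B|A B sAB]; [exact: (is_filterI hF) | apply: is_filterS hF _ => x /sAB].
Qed.

Lemma push_ultra U : is_ultrafilter U -> is_ultrafilter (pushforward f U).
Proof.
move=> hU; split; first exact/push_filter/ultra_filter.
split; last by move=> A; exact: (ultraVC (f @^-1` A) hU).
by move=> h; apply: (ultra_neq0 hU); apply: is_filterS (ultra_filter hU) _ h => x.
Qed.

Lemma push_eq_on (g : X -> Y) F (S : set X) : is_filter F -> F S ->
  {in S, f =1 g} -> pushforward f F = pushforward g F.
Proof.
move=> hF hS efg; apply/funext => A; apply/propext.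
by split=> h; apply: is_filterS hF _ (is_filterI hF h hS) => x [Ax /mem_set/efg e];
  rewrite /preimage /= ?e // -e.
Qed.

Lemma ultra_lift F (K : set (set Y)) : is_filter F -> is_ultrafilter K ->
  pushforward f F `<=` K ->
  exists W, is_ultrafilter W /\ F `<=` W /\ pushforward f W = K.
Proof.
move=> hF hK sFK.
pose H S := exists A B, F A /\ K B /\ A `&` f @^-1` B `<=` S.
have hH : is_filter H.
  split.
    exists setT, setT; split; first exact: is_filterT.
    by split; [exact: is_filterT (ultra_filter hK) |].
  split=> [S1 S2 [A1 [B1 [h1 [k1 s1]]]] [A2 [B2 [h2 [k2 s2]]]]|S1 S2 s12 [A [B [h [k s]]]]].
    exists (A1 `&` A2), (B1 `&` B2); split; first exact: is_filterI.
    split; first exact: is_filterI (ultra_filter hK) _ _.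
    by move=> x [[a1 a2] [b1 b2]]; split; [apply: s1 | apply: s2].
  by exists A, B; do 2 split => //; move=> x /s /s12.
have hH0 : ~ H set0.
  move=> [A [B [hA [hB s]]]].
  have hC : K (~` B) by apply/sFK/(is_filterS hF _ hA) => x Ax Bfx; exact: s x (conj Ax Bfx).
  apply: (ultra_neq0 hK).
  by apply: (is_filterS (ultra_filter hK) _ (is_filterI (ultra_filter hK) hB hC)) => y [].
have [W [hW sHW]] := ultra_extend hH hH0.
exists W; split => //; split.
  move=> A hA; apply: sHW; exists A, setT.
  by split => //; split; [exact: is_filterT (ultra_filter hK) | move=> x []].
apply: (ultra_maximal hK (push_filter (ultra_filter hW)) (ultra_neq0 (push_ultra hW))).
move=> B hB; apply: sHW; exists setT, B.
by split; [exact: is_filterT | split => // x []].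
Qed.

End Pushforward.

Section ProductFilters.
Variables (X Y : Type).

Lemma prod_filter_filter (F : set (set X)) (G : set (set Y)) :
  is_filter F -> is_filter G -> is_filter (prod_filter F G).
Proof.
move=> hF hG; split.
  by exists setT, setT; split; [exact: is_filterT | split; [exact: is_filterT |]].
split=> [S1 S2 [A1 [B1 [h1 [k1 s1]]]] [A2 [B2 [h2 [k2 s2]]]]|S1 S2 s12 [A [B [h [k s]]]]].
  exists (A1 `&` A2), (B1 `&` B2); split; first exact: is_filterI.
  split; first exact: is_filterI.
  by move=> [x y] [/= [a1 a2] [b1 b2]]; split; [apply: s1 | apply: s2].
by exists A, B; do 2 split => //; move=> p /s /s12.
Qed.

Lemma prod_filter_fst (F : set (set X)) (G : set (set Y)) : is_filter G ->
  F `<=` pushforward fst (prod_filter F G).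
Proof.
move=> hG A hA; exists A, setT.
by split => //; split; [exact: is_filterT | move=> [x y] []].
Qed.

Lemma prod_filter_snd (F : set (set X)) (G : set (set Y)) : is_filter F ->
  G `<=` pushforward snd (prod_filter F G).
Proof.
move=> hF B hB; exists setT, B.
by split; [exact: is_filterT | split => //; move=> [x y] []].
Qed.

Lemma ultra_prod_fst (U : set (set X)) (G : set (set Y)) W :
  is_ultrafilter U -> is_filter G -> is_ultrafilter W -> prod_filter U G `<=` W ->
  pushforward fst W = U.
Proof.
move=> hU hG hW sW; apply: (ultra_maximal hU (push_filter _ (ultra_filter hW))).
  exact: ultra_neq0 (push_ultra fst hW).
by move=> A /(prod_filter_fst hG) /sW.
Qed.

Lemma ultra_prod_snd (F : set (set X)) (U : set (set Y)) W :
  is_filter F -> is_ultrafilter U -> is_ultrafilter W -> prod_filter F U `<=` W ->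
  pushforward snd W = U.
Proof.
move=> hF hU hW sW; apply: (ultra_maximal hU (push_filter _ (ultra_filter hW))).
  exact: ultra_neq0 (push_ultra snd hW).
by move=> B /(prod_filter_snd hF) /sW.
Qed.

End ProductFilters.

(** * Pseudotopological spaces *)

Section Convergence.
Implicit Types (X Y Z : pstop).

Lemma ultra_conv_fconv X (U : set (set X)) x :
  is_ultrafilter U -> ps_conv U x -> fconv U x.
Proof.
move=> hU hc V hV sUV.
by rewrite (ultra_maximal hU (ultra_filter hV) (ultra_neq0 hV) sUV).
Qed.

Lemma fconvS X (F G : set (set X)) x : F `<=` G -> fconv F x -> fconv G x.
Proof. by move=> sFG h U hU sGU; apply: h => //; apply: subset_trans sGU. Qed.

Lemma fconv_push X Y (f : X -> Y) (F : set (set X)) x :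
  pcont f -> is_filter F -> fconv F x -> fconv (pushforward f F) (f x).
Proof.
move=> hf hF hc K hK sK; have [W [hW [sW <-]]] := ultra_lift hF hK sK.
exact/hf/hc.
Qed.

Lemma pcont_comp X Y Z (f : X -> Y) (g : Y -> Z) :
  pcont f -> pcont g -> pcont (fun x => g (f x)).
Proof. by move=> hf hg U x /hf /hg. Qed.

Lemma pcont_id X : pcont (fun x : X => x).
Proof. by []. Qed.

Lemma pcont_const X Y (y : Y) : pseudotopological X -> pseudotopological Y ->
  pcont (fun _ : X => y).
Proof.
move=> [hX _] [_ hY] U x /hX hU.
suff -> : pushforward (fun _ : X => y) U = principal y by exact: hY.
apply: ultra_maximal (principal_ultra y) (push_filter _ (ultra_filter hU)) _ _.
  exact: ultra_neq0 (push_ultra _ hU).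
by move=> A Ay; apply: is_filterS (ultra_filter hU) _ (is_filterT (ultra_filter hU)).
Qed.

Lemma top_pseudo (T : topologicalType) : pseudotopological (ps_of_top T).
Proof.
split; first by move=> U x [].
by move=> x; split; [exact: principal_ultra | move=> A; exact: nbhs_singleton].
Qed.

Lemma sub_pseudo X (P : set X) : pseudotopological X -> pseudotopological (sub_space P).
Proof.
move=> [_ hX]; split; first by move=> U x [].
by move=> x; split; [exact: principal_ultra | exact: hX].
Qed.

Lemma pcont_val X (P : set X) : pcont (X := sub_space P) (@proj1_sig _ _).
Proof. by move=> U x []. Qed.

Lemma pcont_sub X Y (P : set Y) (f : X -> sub_space P) : pseudotopological X ->
  pcont (fun x => proj1_sig (f x)) -> pcont f.
Proof. by move=> [hX _] hf U x hc; split; [exact: push_ultra (hX _ _ hc) | exact: (hf U x hc)]. Qed.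

Lemma prod_pseudo X Y : pseudotopological X -> pseudotopological Y ->
  pseudotopological (prod_space X Y).
Proof.
move=> [_ hX] [_ hY]; split; first by move=> U x [].
by move=> x; split; [exact: principal_ultra | split; [exact: hX | exact: hY]].
Qed.

Lemma pcont_fst X Y : pcont (X := prod_space X Y) fst.
Proof. by move=> U p [_ []]. Qed.

Lemma pcont_snd X Y : pcont (X := prod_space X Y) snd.
Proof. by move=> U p [_ []]. Qed.

Lemma pcont_pair X Y Z (f : Z -> X) (g : Z -> Y) : pseudotopological Z ->
  pcont f -> pcont g -> pcont (Y := prod_space X Y) (fun z => (f z, g z)).
Proof.
move=> [hZ _] hf hg U z hc.
by split; [exact: push_ultra (hZ _ _ hc) | split; [exact: hf | exact: hg]].
Qed.

Lemma pcont_swap X Y : pseudotopological X -> pseudotopological Y ->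
  pcont (X := prod_space X Y) (Y := prod_space Y X) (fun p => (p.2, p.1)).
Proof.
by move=> hX hY; exact: pcont_pair (prod_pseudo hX hY) (@pcont_snd _ _) (@pcont_fst _ _).
Qed.

Lemma fconv_prod X Y (F : set (set X)) (G : set (set Y)) x y :
  is_filter F -> is_filter G -> fconv F x -> fconv G y ->
  fconv (X := prod_space X Y) (prod_filter F G) (x, y).
Proof.
move=> hF hG hFx hGy W hW sW; split => //; split.
  by apply: hFx; [exact: push_ultra | move=> A /(prod_filter_fst hG) /sW].
by apply: hGy; [exact: push_ultra | move=> B /(prod_filter_snd hF) /sW].
Qed.

End Convergence.

Section FunctionSpaces.
Implicit Types (X Y Z : pstop).

Lemma fun_space_principal X Y (f : cmap X Y) :
  @ps_conv (fun_space X Y) (principal f) f.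
Proof.
split=> [|G x hG /(fconv_push (proj2_sig f) hG)]; first exact: principal_ultra.
apply: fconvS => S hS; exists [set f], (proj1_sig f @^-1` S).
by split => //; split => // -[g t] [/= -> h].
Qed.

Lemma fun_space_pseudo X Y : pseudotopological (fun_space X Y).
Proof. by split=> [U f []|f]; last exact: fun_space_principal. Qed.

Lemma pcont_uncurry X Y Z (g : X -> fun_space Y Z) : pcont g ->
  pcont (X := prod_space X Y) (fun p => proj1_sig (g p.1) p.2).
Proof.
move=> hg W [x y] [hW [hx hy]].
have [_ /(_ (pushforward snd W) y)] := hg _ _ hx.
move=> /(_ (push_filter _ (ultra_filter hW)) (ultra_conv_fconv (push_ultra _ hW) hy)).
apply; first exact: push_ultra.
move=> S [A [B [hA [hB s]]]].
apply: is_filterS (ultra_filter hW) _ (is_filterI (ultra_filter hW) hA hB).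
by move=> -[x' y'] [/= ha hb]; exact: (s (g x', y')).
Qed.

Lemma pcont_eval X Y : pcont (X := prod_space (fun_space X Y) X) (@evalc X Y).
Proof. exact: (@pcont_uncurry (fun_space X Y) X Y id (@pcont_id _)). Qed.

Section Curry.
Variables (X Y Z : pstop) (f : X * Y -> Z).
Hypotheses (hX : pseudotopological X) (hY : pseudotopological Y).
Hypothesis hf : pcont (X := prod_space X Y) f.

Lemma pcont_section (x : X) : pcont (fun y => f (x, y)).
Proof.
apply: (pcont_comp (Y := prod_space X Y) _ hf).
by apply: pcont_pair; [exact: hY | exact: pcont_const | exact: pcont_id].
Qed.

Definition curry_map (x : X) : fun_space Y Z := exist _ _ (pcont_section x).

Lemma pcont_curry : pcont curry_map.
Proof.
move=> U x hx; have hU : is_ultrafilter U := hX.1 _ _ hx.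
split=> [|G y hG hGy K hK sK]; first exact: push_ultra.
have sub : pushforward f (prod_filter U G) `<=` K.
  move=> S [A [B [hA [hB s]]]]; apply: sK.
  exists (curry_map @` A), B; split.
    by apply: is_filterS (ultra_filter hU) _ hA => x' Ax'; exists x'.
  by split => // -[_ y'] [/= [x' Ax' <-] By']; exact: (s (x', y')).
have [W [hW [sW <-]]] := ultra_lift (prod_filter_filter (ultra_filter hU) hG) hK sub.
apply: hf; split => //; rewrite (ultra_prod_fst hU hG hW sW); split => //.
by apply: hGy; [exact: push_ultra | move=> B /(prod_filter_snd (ultra_filter hU)) /sW].
Qed.

End Curry.

End FunctionSpaces.

(** * The unit interval and paths *)

Lemma ler_dist_min (R : realFieldType) (x1 x2 y1 y2 : R) :
  `|Num.min x1 x2 - Num.min y1 y2| <= Num.max `|x1 - y1| `|x2 - y2|.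
Proof.
set M := Num.max `|x1 - y1| `|x2 - y2|.
have hM1 : `|x1 - y1| <= M by rewrite /M le_max; apply/orP; left.
have hM2 : `|x2 - y2| <= M by rewrite /M le_max; apply/orP; right.
have h1 := ler_norm (x1 - y1); have h2 := ler_norm (y1 - x1); rewrite distrC in h2.
have h3 := ler_norm (x2 - y2); have h4 := ler_norm (y2 - x2); rewrite distrC in h4.
by rewrite ler_norml; case: (leP x1 x2) => ?; case: (leP y1 y2) => ?; apply/andP; split; lra.
Qed.

Lemma ler_dist_max (R : realFieldType) (x1 x2 y1 y2 : R) :
  `|Num.max x1 x2 - Num.max y1 y2| <= Num.max `|x1 - y1| `|x2 - y2|.
Proof.
by move: (@ler_dist_min _ (- x1) (- x2) (- y1) (- y2)); rewrite -!oppr_max -!opprD !normrN.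
Qed.

Definition ival (t : I01) : Rl := proj1_sig t.

Lemma ival_inj : injective ival.
Proof. by move=> s t; exact: sig_inj. Qed.

Lemma ival_ge0 (t : I01) : 0 <= ival t.
Proof. by case/andP: (proj2_sig t). Qed.

Lemma ival_le1 (t : I01) : ival t <= 1.
Proof. by case/andP: (proj2_sig t). Qed.

Lemma ival_clampI (r : Rl) : 0 <= r <= 1 -> ival (clampI r) = r.
Proof. by case/andP=> h0 h1; rewrite /ival /= min_r // max_r. Qed.

Lemma ival_clampI_le0 (r : Rl) : r <= 0 -> ival (clampI r) = 0.
Proof. by move=> h; rewrite /ival /= max_l // ge_min h orbT. Qed.

Lemma ival_clampI_ge1 (r : Rl) : 1 <= r -> ival (clampI r) = 1.
Proof. by move=> h; rewrite /ival /= min_l // max_r. Qed.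

Lemma clampI_ival (t : I01) : clampI (ival t) = t.
Proof. by apply: ival_inj; rewrite ival_clampI // ival_ge0 ival_le1. Qed.

Lemma ival_I0 : ival I0 = 0.
Proof. by rewrite ival_clampI // lexx ler01. Qed.

Lemma ival_I1 : ival I1 = 1.
Proof. by rewrite ival_clampI // lexx ler01. Qed.

Lemma dist_clampI (a b : Rl) : `|ival (clampI a) - ival (clampI b)| <= `|a - b|.
Proof.
apply: le_trans (ler_dist_max _ _ _ _) _; rewrite subrr normr0 ge_max normr_ge0 /=.
by apply: le_trans (ler_dist_min _ _ _ _) _; rewrite subrr normr0 ge_max normr_ge0 lexx.
Qed.

Lemma I01_pseudo : pseudotopological I01.
Proof. exact/sub_pseudo/top_pseudo. Qed.

Lemma I01_conv (V : set (set I01)) (s : I01) : @ps_conv I01 V s <->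
  is_ultrafilter V /\ (forall e : Rl, 0 < e -> V [set u | `|ival s - ival u| < e]).
Proof.
split=> [[hV [_ h]]|[hV h]]; split => //.
  by move=> e e0; apply: (h [set y | `|ival s - y| < e]); apply/nbhs_ballP; exists e.
split; first exact: push_ultra.
by move=> N /nbhs_ballP [e e0 hN]; apply: is_filterS (ultra_filter hV) _ (h e e0) => u /hN.
Qed.

Lemma I01_conv_le (V : set (set I01)) s (c : Rl) : @ps_conv I01 V s ->
  V [set u | ival u <= c] -> ival s <= c.
Proof.
move=> /I01_conv [hV hs] hL; rewrite leNgt; apply/negP => lt_cs.
have e0 : 0 < ival s - c by rewrite subr_gt0.
have := is_filterI (ultra_filter hV) hL (hs _ e0).
move=> /(ultra_inhabited hV) [u [/= h1]]; rewrite ltr_norml => /andP [_ h2]; lra.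
Qed.

Lemma I01_conv_ge (V : set (set I01)) s (c : Rl) : @ps_conv I01 V s ->
  V (~` [set u | ival u <= c]) -> c <= ival s.
Proof.
move=> /I01_conv [hV hs] hL; rewrite leNgt; apply/negP => lt_sc.
have e0 : 0 < c - ival s by rewrite subr_gt0.
have := is_filterI (ultra_filter hV) hL (hs _ e0).
move=> /(ultra_inhabited hV) [u [/= h1]]; rewrite ltr_norml => /andP [h2 _]; apply: h1; lra.
Qed.

Definition I01_lipschitz (f : I01 -> I01) (k : Rl) :=
  forall u v, `|ival (f u) - ival (f v)| <= k * `|ival u - ival v|.

Definition I01_lipschitz2 (f : I01 -> I01 -> I01) (k : Rl) :=
  forall s t s' t',
    `|ival (f s t) - ival (f s' t')| <= k * (`|ival s - ival s'| + `|ival t - ival t'|).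

Lemma I01_lipschitz2_pcont (f : I01 -> I01 -> I01) (k : Rl) : 0 < k -> I01_lipschitz2 f k ->
  pcont (X := prod_space I01 I01) (fun p => f p.1 p.2).
Proof.
move=> k0 hf W [s t] [hW [/I01_conv [_ hs] /I01_conv [_ ht]]].
apply/I01_conv; split=> [|e e0]; first exact: push_ultra.
have d0 : 0 < e / (2 * k) by rewrite divr_gt0 // mulr_gt0.
apply: is_filterS (ultra_filter hW) _ (is_filterI (ultra_filter hW) (hs _ d0) (ht _ d0)).
move=> [a b] [/= h1 h2]; apply: le_lt_trans (hf s t a b) _.
have -> : e = k * (e / (2 * k) + e / (2 * k)) by field; rewrite gt_eqF.
by rewrite ltr_pM2l // ltrD.
Qed.

Lemma I01_lipschitz_pcont (f : I01 -> I01) (k : Rl) : 0 < k -> I01_lipschitz f k -> pcont f.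
Proof.
move=> k0 hf.
have diag : pcont (Y := prod_space I01 I01) (fun t : I01 => (t, t)).
  by apply: pcont_pair; [exact: I01_pseudo | exact: pcont_id | exact: pcont_id].
apply: pcont_comp diag (@I01_lipschitz2_pcont (fun _ t => f t) k k0 _) => s t s' t'.
by apply: le_trans (hf t t') _; rewrite ler_pM2l // lerDr.
Qed.

Definition stretchL (t : I01) : I01 := clampI (2 * ival t).
Definition stretchR (t : I01) : I01 := clampI (2 * ival t - 1).
Definition revI (t : I01) : I01 := clampI (1 - ival t).

Lemma ival_stretchL t : ival t <= 2^-1 -> ival (stretchL t) = 2 * ival t.
Proof. by move=> h; have := ival_ge0 t => t0; rewrite ival_clampI //; apply/andP; split; lra. Qed.

Lemma stretchL_upper t : 2^-1 <= ival t -> stretchL t = I1.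
Proof. by move=> h; apply: ival_inj; rewrite ival_I1 ival_clampI_ge1 //; lra. Qed.

Lemma ival_stretchR t : 2^-1 <= ival t -> ival (stretchR t) = 2 * ival t - 1.
Proof. by move=> h; have := ival_le1 t => t1; rewrite ival_clampI //; apply/andP; split; lra. Qed.

Lemma stretchR_lower t : ival t <= 2^-1 -> stretchR t = I0.
Proof. by move=> h; apply: ival_inj; rewrite ival_I0 ival_clampI_le0 //; lra. Qed.

Lemma ival_revI t : ival (revI t) = 1 - ival t.
Proof.
by have := ival_ge0 t; have := ival_le1 t => t1 t0; rewrite ival_clampI //; apply/andP; split; lra.
Qed.

Lemma I01_lipschitz_stretchL : I01_lipschitz stretchL 2.
Proof. by move=> u v; apply: le_trans (dist_clampI _ _) _; rewrite -mulrBr normrM ger0_norm. Qed.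

Lemma I01_lipschitz_stretchR : I01_lipschitz stretchR 2.
Proof.
move=> u v; apply: le_trans (dist_clampI _ _) _.
have -> : 2 * ival u - 1 - (2 * ival v - 1) = 2 * (ival u - ival v) by ring.
by rewrite normrM ger0_norm.
Qed.

Lemma I01_lipschitz_revI : I01_lipschitz revI 1.
Proof.
move=> u v; apply: le_trans (dist_clampI _ _) _.
have -> : 1 - ival u - (1 - ival v) = - (ival u - ival v) by ring.
by rewrite normrN mul1r.
Qed.

Lemma concat_lower (A : Type) (p q : I01 -> A) t : ival t <= 2^-1 ->
  concat p q t = p (stretchL t).
Proof. by rewrite /concat => ->. Qed.

Lemma concat_upper (A : Type) (p q : I01 -> A) t : 2^-1 < ival t ->
  concat p q t = q (stretchR t).
Proof. by rewrite /concat -/(ival t) leNgt => ->. Qed.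

Lemma pcont_paste (S X : pstop) (tau : S -> I01) (f g : S -> X) :
  pseudotopological S -> pcont tau -> pcont f -> pcont g ->
  (forall s, ival (tau s) = 2^-1 -> f s = g s) ->
  pcont (fun s => if ival (tau s) <= 2^-1 then f s else g s).
Proof.
move=> [hS _] htau hf hg efg U s hs; have hU := ultra_filter (hS _ _ hs).
case: (ultraVC (tau @^-1` [set u | ival u <= 2^-1]) (hS _ _ hs)) => hL.
  have /= le_s := I01_conv_le (htau _ _ hs) hL.
  rewrite le_s (push_eq_on (g := f) hU hL) => [|x /set_mem /= ->]; last by [].
  exact: hf.
have /= ge_s := I01_conv_ge (htau _ _ hs) hL.
have -> : (if ival (tau s) <= 2^-1 then f s else g s) = g s.
  by case: ifP => // le_s; apply: efg; apply/eqP; rewrite eq_le le_s.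
rewrite (push_eq_on (g := g) hU hL) => [|x /set_mem /= /negP/negbTE ->]; last by [].
exact: hg.
Qed.

Lemma concat_pcont (A : pstop) (p q : I01 -> A) : pcont p -> pcont q -> p I1 = q I0 ->
  pcont (concat p q).
Proof.
move=> hp hq e; apply: (pcont_paste (tau := id) (f := p \o stretchL) (g := q \o stretchR)).
- exact: I01_pseudo.
- exact: pcont_id.
- exact: pcont_comp (I01_lipschitz_pcont _ I01_lipschitz_stretchL) hp.
- exact: pcont_comp (I01_lipschitz_pcont _ I01_lipschitz_stretchR) hq.
- by move=> t t_half; rewrite /= stretchL_upper ?stretchR_lower ?t_half.
Qed.

Lemma stretchL_I0 : stretchL I0 = I0.
Proof. by apply: ival_inj; rewrite ival_clampI ival_I0 ?mulr0 // lexx ler01. Qed.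

Lemma stretchR_I1 : stretchR I1 = I1.
Proof. by apply: ival_inj; rewrite ival_clampI ival_I1; [lra | apply/andP; split; lra]. Qed.

Lemma concat_I0 (A : Type) (p q : I01 -> A) : concat p q I0 = p I0.
Proof. by rewrite concat_lower ?stretchL_I0 // ival_I0; lra. Qed.

Lemma concat_I1 (A : Type) (p q : I01 -> A) : concat p q I1 = q I1.
Proof. by rewrite concat_upper ?stretchR_I1 // ival_I1; lra. Qed.

Lemma revI_I0 : revI I0 = I1.
Proof. by apply: ival_inj; rewrite ival_I1 /revI ival_I0 subr0 ival_clampI // lexx ler01. Qed.

Lemma revI_I1 : revI I1 = I0.
Proof. by apply: ival_inj; rewrite ival_I0 /revI ival_I1 subrr ival_clampI // lexx ler01. Qed.

Lemma reverseE (A : Type) (p : I01 -> A) t : reverse p t = p (revI t).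
Proof. by []. Qed.

Lemma reverse_pcont (A : pstop) (p : I01 -> A) : pcont p -> pcont (reverse p).
Proof. exact: pcont_comp (I01_lipschitz_pcont _ I01_lipschitz_revI). Qed.

Lemma reverse_I0 (A : Type) (p : I01 -> A) : reverse p I0 = p I1.
Proof. by rewrite -revI_I0. Qed.

Lemma reverse_I1 (A : Type) (p : I01 -> A) : reverse p I1 = p I0.
Proof. by rewrite -revI_I1. Qed.

Section PathComponents.
Variable A : pstop.
Hypothesis hA : pseudotopological A.

Lemma path_rel_refl (a : A) : path_rel a a.
Proof. by exists (exist _ (fun _ => a) (pcont_const a I01_pseudo hA)). Qed.

Lemma path_rel_sym (a b : A) : path_rel a b -> path_rel b a.
Proof.
move=> [[p hp] /= [pa pb]]; exists (exist _ (reverse p) (reverse_pcont hp)).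
by rewrite /= reverse_I0 reverse_I1.
Qed.

Lemma path_rel_trans (a b c : A) : path_rel a b -> path_rel b c -> path_rel a c.
Proof.
move=> [[p hp] /= [pa pb]] [[q hq] /= [qb qc]].
have e : p I1 = q I0 by rewrite pb qb.
by exists (exist _ (concat p q) (concat_pcont hp hq e)); rewrite /= concat_I0 concat_I1.
Qed.

Lemma pi0_proj_path (a b : A) : path_rel a b -> pi0_proj a = pi0_proj b.
Proof.
move=> hab; apply: sig_inj; apply/funext => c; apply/propext.
by split=> [/(path_rel_trans (path_rel_sym hab))|/(path_rel_trans hab)].
Qed.

Lemma path_pi0_proj (a b : A) : pi0_proj a = pi0_proj b -> path_rel a b.
Proof.
move=> /(congr1 (@proj1_sig _ _)) /= e.
have : Defs.pcomp b b by exact: path_rel_refl.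
by rewrite -e.
Qed.

Lemma pi0_proj_surj (C : pi0car A) : exists a, C = pi0_proj a.
Proof. by case: C => C [a ea]; exists a; exact: sig_inj. Qed.

End PathComponents.

Lemma I01_lipschitz_id (k : Rl) : 1 <= k -> I01_lipschitz (fun t => t) k.
Proof. by move=> k1 u v; rewrite ler_peMl. Qed.

Lemma I01_lipschitz_cst (c : I01) (k : Rl) : 0 <= k -> I01_lipschitz (fun _ => c) k.
Proof. by move=> k0 u v; rewrite subrr normr0 mulr_ge0. Qed.

Definition assoc_reparam (t : I01) : I01 :=
  clampI (Num.min (Num.min (2 * ival t) (ival t + 4^-1)) ((ival t + 1) / 2)).
Definition tent (t : I01) : I01 := clampI (Num.min (2 * ival t) (2 - 2 * ival t)).
Definition vee (t : I01) : I01 := clampI (Num.max (1 - 2 * ival t) (2 * ival t - 1)).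

Lemma I01_lipschitz_assoc_reparam : I01_lipschitz assoc_reparam 2.
Proof.
move=> u v; apply: le_trans (dist_clampI _ _) _.
apply: le_trans (ler_dist_min _ _ _ _) _; rewrite ge_max.
have -> : (ival u + 1) / 2 - (ival v + 1) / 2 = 2^-1 * (ival u - ival v) by field.
apply/andP; split; last first.
  by rewrite normrM ger0_norm ?invr_ge0 // ler_wpM2r //; lra.
apply: le_trans (ler_dist_min _ _ _ _) _; rewrite ge_max -mulrBr normrM ger0_norm //.
have -> : ival u + 4^-1 - (ival v + 4^-1) = ival u - ival v by ring.
by apply/andP; split; [exact: lexx | rewrite ler_peMl ?normr_ge0 ?ler1n].
Qed.

Lemma I01_lipschitz_tent : I01_lipschitz tent 2.
Proof.
move=> u v; apply: le_trans (dist_clampI _ _) _.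
apply: le_trans (ler_dist_min _ _ _ _) _.
have -> : 2 - 2 * ival u - (2 - 2 * ival v) = - (2 * (ival u - ival v)) by ring.
by rewrite normrN -mulrBr normrM ger0_norm // maxxx.
Qed.

Lemma I01_lipschitz_vee : I01_lipschitz vee 2.
Proof.
move=> u v; apply: le_trans (dist_clampI _ _) _.
apply: le_trans (ler_dist_max _ _ _ _) _.
have -> : 2 * ival u - 1 - (2 * ival v - 1) = 2 * (ival u - ival v) by ring.
have -> : 1 - 2 * ival u - (1 - 2 * ival v) = - (2 * (ival u - ival v)) by ring.
by rewrite normrN normrM ger0_norm // maxxx.
Qed.

Section ReparamValues.
Variable t : I01.

Lemma ival_assoc_reparam_lo : ival t <= 4^-1 -> ival (assoc_reparam t) = 2 * ival t.
Proof.
move: (ival_ge0 t) => t0 h; rewrite /assoc_reparam min_l; last first.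
  by rewrite ge_min; apply/orP; left; lra.
by rewrite min_l ?ival_clampI //; [apply/andP; split | ]; lra.
Qed.

Lemma ival_assoc_reparam_mid : 4^-1 <= ival t -> ival t <= 2^-1 ->
  ival (assoc_reparam t) = ival t + 4^-1.
Proof.
move=> h h'; rewrite /assoc_reparam min_l; last first.
  by rewrite ge_min; apply/orP; right; lra.
by rewrite min_r ?ival_clampI //; [apply/andP; split | ]; lra.
Qed.

Lemma ival_assoc_reparam_hi : 2^-1 <= ival t -> ival (assoc_reparam t) = (ival t + 1) / 2.
Proof.
move: (ival_le1 t) => t1 h; rewrite /assoc_reparam min_r; last first.
  by rewrite le_min; apply/andP; split; lra.
by rewrite ival_clampI //; apply/andP; split; lra.
Qed.

Lemma ival_tent_lo : ival t <= 2^-1 -> ival (tent t) = 2 * ival t.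
Proof.
move: (ival_ge0 t) => t0 h.
by rewrite /tent min_l ?ival_clampI //; [apply/andP; split | ]; lra.
Qed.

Lemma ival_tent_hi : 2^-1 <= ival t -> ival (tent t) = 2 - 2 * ival t.
Proof.
move: (ival_le1 t) => t1 h.
by rewrite /tent min_r ?ival_clampI //; [apply/andP; split | ]; lra.
Qed.

Lemma ival_vee_lo : ival t <= 2^-1 -> ival (vee t) = 1 - 2 * ival t.
Proof.
move: (ival_ge0 t) => t0 h.
by rewrite /vee max_l ?ival_clampI //; [apply/andP; split | ]; lra.
Qed.

Lemma ival_vee_hi : 2^-1 <= ival t -> ival (vee t) = 2 * ival t - 1.
Proof.
move: (ival_le1 t) => t1 h.
by rewrite /vee max_r ?ival_clampI //; [apply/andP; split | ]; lra.
Qed.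

End ReparamValues.

Lemma assoc_reparam_I0 : assoc_reparam I0 = I0.
Proof. by apply: ival_inj; rewrite ival_assoc_reparam_lo ival_I0 ?mulr0 //; lra. Qed.

Lemma assoc_reparam_I1 : assoc_reparam I1 = I1.
Proof. by apply: ival_inj; rewrite ival_assoc_reparam_hi ival_I1 //; lra. Qed.

Lemma tent_I0 : tent I0 = I0.
Proof. by apply: ival_inj; rewrite ival_tent_lo ival_I0 ?mulr0 //; lra. Qed.

Lemma tent_I1 : tent I1 = I0.
Proof. by apply: ival_inj; rewrite ival_tent_hi ival_I1 ?ival_I0; lra. Qed.

Lemma vee_I0 : vee I0 = I1.
Proof. by apply: ival_inj; rewrite ival_vee_lo ival_I0 ?ival_I1; lra. Qed.

Lemma vee_I1 : vee I1 = I1.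
Proof. by apply: ival_inj; rewrite ival_vee_hi ival_I1; lra. Qed.

Definition interp (phi psi : I01 -> I01) (s t : I01) : I01 :=
  clampI ((1 - ival s) * ival (phi t) + ival s * ival (psi t)).

Lemma I01_lipschitz2_interp phi psi : I01_lipschitz phi 2 -> I01_lipschitz psi 2 ->
  I01_lipschitz2 (interp phi psi) 5.
Proof.
move=> hphi hpsi s t s' t'; apply: le_trans (dist_clampI _ _) _.
set a := ival (phi t); set a' := ival (phi t'); set b := ival (psi t); set b' := ival (psi t').
have -> : (1 - ival s) * a + ival s * b - ((1 - ival s') * a' + ival s' * b') =
   (1 - ival s) * (a - a') + ival s * (b - b') + (ival s' - ival s) * (a' - b') by ring.
apply: le_trans (ler_normD _ _) _; apply: le_trans (lerD (ler_normD _ _) (lexx _)) _.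
rewrite !normrM [`|ival s' - _|]distrC.
have := ival_ge0 s; have := ival_le1 s => s1 s0.
have ha : `|1 - ival s| * `|a - a'| <= `|a - a'| by rewrite ler_piMl // ger0_norm; lra.
have hb : `|ival s| * `|b - b'| <= `|b - b'| by rewrite ler_piMl // ger0_norm.
have hab : `|ival s - ival s'| * `|a' - b'| <= `|ival s - ival s'|.
  rewrite ler_piMr // ler_norml; have := ival_ge0 (phi t'); have := ival_le1 (phi t').
  by have := ival_ge0 (psi t'); have := ival_le1 (psi t'); rewrite /a' /b'; lra.
have := hphi t t'; have := hpsi t t'; rewrite -/a -/a' -/b -/b'.
have := normr_ge0 (ival s - ival s'); have := normr_ge0 (ival t - ival t'); lra.
Qed.

Lemma interp0 phi psi t : interp phi psi I0 t = phi t.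
Proof. by rewrite /interp ival_I0 subr0 mul1r mul0r addr0 clampI_ival. Qed.

Lemma interp1 phi psi t : interp phi psi I1 t = psi t.
Proof. by rewrite /interp ival_I1 subrr mul0r mul1r add0r clampI_ival. Qed.

Lemma interp_eq phi psi s t : phi t = psi t -> interp phi psi s t = phi t.
Proof.
by move=> e; rewrite /interp e -mulrDl subrK mul1r clampI_ival.
Qed.

(** * Loops *)

Section Loops.
Variables (X : pstop) (x0 : X).
Hypothesis hX : pseudotopological X.
Local Notation Om := (loop_space x0).

Lemma loop_fun_I0 (l : Om) : loop_fun l I0 = x0.
Proof. by case: (proj2_sig l). Qed.

Lemma loop_fun_I1 (l : Om) : loop_fun l I1 = x0.
Proof. by case: (proj2_sig l). Qed.

Lemma loop_fun_pcont (l : Om) : pcont (loop_fun l).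
Proof. exact: proj2_sig (proj1_sig l). Qed.

Lemma loop_fun_inj : injective (@loop_fun X x0).
Proof. by move=> l l' e; apply/sig_inj/sig_inj. Qed.

Definition mkloop (f : I01 -> X) (hf : pcont f) (h0 : f I0 = x0) (h1 : f I1 = x0) : Om :=
  exist _ (exist _ f hf) (conj h0 h1).

Definition loop_cat (a b : Om) : Om :=
  @mkloop (concat (loop_fun a) (loop_fun b))
    (concat_pcont (loop_fun_pcont a) (loop_fun_pcont b)
       (etrans (loop_fun_I1 a) (esym (loop_fun_I0 b))))
    (etrans (concat_I0 _ _) (loop_fun_I0 a)) (etrans (concat_I1 _ _) (loop_fun_I1 b)).

Definition loop_rev (a : Om) : Om :=
  @mkloop (reverse (loop_fun a)) (reverse_pcont (loop_fun_pcont a))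
    (etrans (reverse_I0 _) (loop_fun_I1 a)) (etrans (reverse_I1 _) (loop_fun_I0 a)).

Definition loop_cst : Om := @mkloop (fun _ => x0) (pcont_const x0 I01_pseudo hX) erefl erefl.

Lemma loop_fun_cat (a b : Om) : loop_fun (loop_cat a b) = concat (loop_fun a) (loop_fun b).
Proof. by []. Qed.

Lemma loop_fun_rev (a : Om) : loop_fun (loop_rev a) = reverse (loop_fun a).
Proof. by []. Qed.

Lemma loop_space_pseudo : pseudotopological Om.
Proof. exact/sub_pseudo/fun_space_pseudo. Qed.

Lemma pcont_loop_eval (S : pstop) (l : S -> Om) (t : S -> I01) :
  pseudotopological S -> pcont l -> pcont t -> pcont (fun s => loop_fun (l s) (t s)).
Proof.
move=> hS hl ht.
have hlt : pcont (Y := prod_space (fun_space I01 X) I01) (fun s => (proj1_sig (l s), t s)).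
  by apply: pcont_pair => //; exact: pcont_comp hl (@pcont_val _ _).
exact: pcont_comp hlt (@pcont_eval _ _).
Qed.

Lemma pcont_to_loop (S : pstop) (h : S -> Om) : pseudotopological S ->
  pcont (X := prod_space S I01) (fun p => loop_fun (h p.1) p.2) -> pcont h.
Proof.
move=> hS hh; apply: (pcont_sub hS).
suff -> : (fun s => proj1_sig (h s)) = curry_map hS I01_pseudo hh by exact: pcont_curry.
by apply/funext => s; exact: sig_inj.
Qed.

Lemma loop_cat_pcont : pcont (X := prod_space Om Om) (fun p => loop_cat p.1 p.2).
Proof.
have hOO := prod_pseudo loop_space_pseudo loop_space_pseudo.
have hOOI := prod_pseudo hOO I01_pseudo.
have hf : pcont (X := prod_space (prod_space Om Om) I01) (fun p => loop_fun p.1.1 (stretchL p.2)).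
  apply: pcont_loop_eval hOOI (pcont_comp (@pcont_fst _ _) (@pcont_fst _ _)) _.
  exact: pcont_comp (@pcont_snd _ _) (I01_lipschitz_pcont _ I01_lipschitz_stretchL).
have hg : pcont (X := prod_space (prod_space Om Om) I01) (fun p => loop_fun p.1.2 (stretchR p.2)).
  apply: pcont_loop_eval hOOI (pcont_comp (@pcont_fst _ _) (@pcont_snd _ _)) _.
  exact: pcont_comp (@pcont_snd _ _) (I01_lipschitz_pcont _ I01_lipschitz_stretchR).
apply: (pcont_to_loop hOO); apply: (pcont_paste hOOI (@pcont_snd _ _) hf hg).
move=> [[a b] t] /= t_half.
by rewrite stretchL_upper ?stretchR_lower ?t_half // loop_fun_I1 loop_fun_I0.
Qed.

Lemma loop_rev_pcont : pcont loop_rev.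
Proof.
have hOI := prod_pseudo loop_space_pseudo I01_pseudo.
apply: pcont_to_loop loop_space_pseudo _.
apply: pcont_loop_eval hOI (@pcont_fst _ _) _.
exact: pcont_comp (@pcont_snd _ _) (I01_lipschitz_pcont _ I01_lipschitz_revI).
Qed.

Lemma path_rel_homotopy (m : Om) (H : I01 -> I01 -> I01) (k : Rl) :
  0 < k -> I01_lipschitz2 H k ->
  (forall s, loop_fun m (H s I0) = x0) -> (forall s, loop_fun m (H s I1) = x0) ->
  forall a b : Om, loop_fun a = loop_fun m \o H I0 -> loop_fun b = loop_fun m \o H I1 ->
  path_rel a b.
Proof.
move=> k0 hH h0 h1 a b ea eb; have hH2 := I01_lipschitz2_pcont k0 hH.
pose path s := @mkloop (loop_fun m \o H s)
  (pcont_comp (pcont_section I01_pseudo I01_pseudo hH2 s) (loop_fun_pcont m)) (h0 s) (h1 s).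
have hpath : pcont path.
  by apply: pcont_to_loop I01_pseudo _; exact: pcont_comp hH2 (loop_fun_pcont m).
by exists (exist _ path hpath); split; apply: loop_fun_inj; rewrite ?ea ?eb.
Qed.

Lemma path_rel_reparam (m : Om) (phi psi : I01 -> I01) :
  I01_lipschitz phi 2 -> I01_lipschitz psi 2 -> phi I0 = psi I0 -> phi I1 = psi I1 ->
  forall a b : Om, loop_fun a = loop_fun m \o phi -> loop_fun b = loop_fun m \o psi ->
  path_rel a b.
Proof.
move=> hphi hpsi e0 e1 a b ea eb.
have m0 : loop_fun m (phi I0) = x0 by have := loop_fun_I0 a; rewrite ea.
have m1 : loop_fun m (phi I1) = x0 by have := loop_fun_I1 a; rewrite ea.
apply: (path_rel_homotopy (m := m) (H := interp phi psi) (k := 5)).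
- by [].
- exact: I01_lipschitz2_interp.
- by move=> s; rewrite interp_eq.
- by move=> s; rewrite interp_eq.
- by rewrite ea; apply/funext => t; rewrite /= interp0.
- by rewrite eb; apply/funext => t; rewrite /= interp1.
Qed.

Lemma loop_cat_assoc_path (a b c : Om) :
  path_rel (loop_cat (loop_cat a b) c) (loop_cat a (loop_cat b c)).
Proof.
apply: (path_rel_reparam (m := loop_cat a (loop_cat b c)) I01_lipschitz_assoc_reparam
  (I01_lipschitz_id _)) => //; first lra.
- by rewrite assoc_reparam_I0.
- by rewrite assoc_reparam_I1.
apply/funext => u; rewrite /comp !loop_fun_cat; move: (ival_ge0 u) (ival_le1 u) => u0 u1.
have [le_u4|lt_4u] := leP (ival u) 4^-1.
  have e := ival_assoc_reparam_lo le_u4.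
  rewrite concat_lower; last lra.
  rewrite concat_lower; last by rewrite ival_stretchL; lra.
  rewrite concat_lower; last by rewrite e; lra.
  by congr (loop_fun a (stretchL _)); apply: ival_inj; rewrite ival_stretchL ?e //; lra.
have [le_u2|lt_2u] := leP (ival u) 2^-1.
  have e := ival_assoc_reparam_mid (ltW lt_4u) le_u2.
  rewrite concat_lower // concat_upper; last by rewrite ival_stretchL //; lra.
  rewrite concat_upper; last by rewrite e; lra.
  rewrite concat_lower; last by rewrite ival_stretchR; lra.
  congr (loop_fun b _); apply: ival_inj.
  by rewrite ival_stretchR ?ival_stretchL ?ival_stretchR //; lra.
have e := ival_assoc_reparam_hi (ltW lt_2u).
rewrite concat_upper // concat_upper; last by rewrite e; lra.
rewrite concat_upper; last by rewrite ival_stretchR; lra.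
congr (loop_fun c _); apply: ival_inj.
by rewrite ival_stretchR ?ival_stretchR //; lra.
Qed.

Lemma loop_cst_cat_path (a : Om) : path_rel (loop_cat loop_cst a) a.
Proof.
apply: (path_rel_reparam (m := a) I01_lipschitz_stretchR (I01_lipschitz_id _)) => //; first lra.
- by rewrite stretchR_lower // ival_I0; lra.
- exact: stretchR_I1.
apply/funext => u; rewrite /comp loop_fun_cat.
have [le_u2|lt_2u] := leP (ival u) 2^-1.
  by rewrite concat_lower // stretchR_lower // loop_fun_I0.
by rewrite concat_upper.
Qed.

Lemma loop_cat_cst_path (a : Om) : path_rel (loop_cat a loop_cst) a.
Proof.
apply: (path_rel_reparam (m := a) I01_lipschitz_stretchL (I01_lipschitz_id _)) => //; first lra.
- exact: stretchL_I0.
- by rewrite stretchL_upper // ival_I1; lra.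
apply/funext => u; rewrite /comp loop_fun_cat.
have [le_u2|lt_2u] := leP (ival u) 2^-1.
  by rewrite concat_lower.
by rewrite concat_upper // stretchL_upper ?loop_fun_I1 //; lra.
Qed.

Lemma loop_cat_rev_path (a : Om) : path_rel (loop_cat a (loop_rev a)) loop_cst.
Proof.
apply: (path_rel_reparam (m := a) I01_lipschitz_tent (I01_lipschitz_cst I0 _)); first lra.
- exact: tent_I0.
- exact: tent_I1.
- apply/funext => u; rewrite /comp loop_fun_cat loop_fun_rev.
  have [le_u2|lt_2u] := leP (ival u) 2^-1.
    rewrite concat_lower //; congr (loop_fun a _); apply: ival_inj.
    by rewrite ival_stretchL ?ival_tent_lo.
  rewrite concat_upper // reverseE; congr (loop_fun a _); apply: ival_inj.
  by rewrite ival_revI ival_stretchR ?ival_tent_hi; lra.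
- by apply/funext => u; rewrite /comp loop_fun_I0.
Qed.

Lemma loop_rev_cat_path (a : Om) : path_rel (loop_cat (loop_rev a) a) loop_cst.
Proof.
apply: (path_rel_reparam (m := a) I01_lipschitz_vee (I01_lipschitz_cst I1 _)); first lra.
- exact: vee_I0.
- exact: vee_I1.
- apply/funext => u; rewrite /comp loop_fun_cat loop_fun_rev.
  have [le_u2|lt_2u] := leP (ival u) 2^-1.
    rewrite concat_lower // reverseE; congr (loop_fun a _); apply: ival_inj.
    by rewrite ival_revI ival_stretchL ?ival_vee_lo.
  rewrite concat_upper //; congr (loop_fun a _); apply: ival_inj.
  by rewrite ival_stretchR ?ival_vee_hi //; lra.
- by apply/funext => u; rewrite /comp loop_fun_I1.
Qed.

End Loops.

(** * The pseudotopological fundamental group *)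

Definition lifts_conv (A B : pstop) (p : A -> B) :=
  forall U b, ps_conv U b -> exists V a, ps_conv V a /\ b = p a /\ U = pushforward p V.

Lemma pcont_of_lift (A B Z : pstop) (p : A -> B) (h : B -> Z) :
  lifts_conv p -> pcont (fun a => h (p a)) -> pcont h.
Proof. by move=> hp hh U b /hp [V [a [hV [-> ->]]]]; exact: hh. Qed.

(* Unlike finality itself, liftability of convergent ultrafilters survives products. *)
Lemma lifts_conv_prod (A1 A2 B1 B2 : pstop) (p1 : A1 -> B1) (p2 : A2 -> B2) :
  pseudotopological A1 -> pseudotopological A2 -> lifts_conv p1 -> lifts_conv p2 ->
  lifts_conv (A := prod_space A1 A2) (B := prod_space B1 B2) (fun a => (p1 a.1, p2 a.2)).
Proof.
move=> [hA1 _] [hA2 _] hp1 hp2 W [b1 b2] [hW [/= /hp1 [V1 [a1 [c1 [-> e1]]]]]].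
move=> /hp2 [V2 [a2 [c2 [-> e2]]]]; have hV1 := hA1 _ _ c1; have hV2 := hA2 _ _ c2.
have sub : pushforward (fun a => (p1 a.1, p2 a.2)) (prod_filter V1 V2) `<=` W.
  move=> S [B [C [hB [hC s]]]].
  have w1 : W [set b | (p1 @` B) b.1].
    change (pushforward fst W (p1 @` B)); rewrite e1.
    by apply: is_filterS (ultra_filter hV1) _ hB => x Bx; exists x.
  have w2 : W [set b | (p2 @` C) b.2].
    change (pushforward snd W (p2 @` C)); rewrite e2.
    by apply: is_filterS (ultra_filter hV2) _ hC => x Cx; exists x.
  apply: is_filterS (ultra_filter hW) _ (is_filterI (ultra_filter hW) w1 w2).
  by move=> -[c d] [/= [x Bx <-] [y Cy <-]]; exact: (s (x, y)).
have [W' [hW' [sW' eW']]] :=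
  ultra_lift (prod_filter_filter (ultra_filter hV1) (ultra_filter hV2)) hW sub.
exists W', (a1, a2); split; last by split; last by rewrite eW'.
split => //; split.
  by rewrite (ultra_prod_fst hV1 (ultra_filter hV2) hW' sW').
by rewrite (ultra_prod_snd (ultra_filter hV1) hV2 hW' sW').
Qed.

Section PathComponentSpace.
Variable A : pstop.
Hypothesis hA : pseudotopological A.

Lemma pi0_ps_pseudo : pseudotopological (pi0_ps A).
Proof.
split=> [U C [->|[V [a [hV [_ ->]]]]]|C]; last by left.
  exact: principal_ultra.
exact/push_ultra/(hA.1 _ _ hV).
Qed.

Lemma pi0_ps_proj_pcont : pcont (Y := pi0_ps A) (@pi0_proj A).
Proof. by move=> V a hV; right; exists V, a. Qed.

Lemma pi0_ps_lifts : lifts_conv (B := pi0_ps A) (@pi0_proj A).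
Proof.
move=> U C [->|[V [a [hV [-> ->]]]]]; last by exists V, a.
have [a ->] := pi0_proj_surj C.
by exists (principal a), a; split; [exact: hA.2 | split].
Qed.

End PathComponentSpace.

Section LoopGroup.
Variables (X : pstop) (x0 : X).
Hypothesis hX : pseudotopological X.
Local Notation Om := (loop_space x0).
Local Notation P := (pi0car Om).
Local Notation q := (@pi0_proj Om).
Local Notation hOm := (loop_space_pseudo x0).

Definition pi0_repr (C : P) : Om := proj1_sig (cid (pi0_proj_surj C)).

Lemma pi0_reprK (C : P) : q (pi0_repr C) = C.
Proof. exact: esym (proj2_sig (cid (pi0_proj_surj C))). Qed.

Lemma path_rel_repr (a : Om) : path_rel (pi0_repr (q a)) a.
Proof. by apply: (path_pi0_proj hOm); rewrite pi0_reprK. Qed.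

Definition pi0_mul (C D : P) : P := q (loop_cat (pi0_repr C) (pi0_repr D)).
Definition pi0_inv (C : P) : P := q (loop_rev (pi0_repr C)).
Definition pi0_one : P := q (loop_cst x0 hX).

Lemma path_rel_cat (a a' b b' : Om) : path_rel a a' -> path_rel b b' ->
  path_rel (loop_cat a b) (loop_cat a' b').
Proof.
move=> [[p hp] /= [pa pb]] [[r hr] /= [ra rb]].
have hpr : pcont (Y := prod_space Om Om) (fun s => (p s, r s)).
  exact: pcont_pair I01_pseudo hp hr.
exists (exist _ _ (pcont_comp hpr (loop_cat_pcont (x0 := x0)))).
by rewrite /= pa pb ra rb.
Qed.

Lemma path_rel_rev (a a' : Om) : path_rel a a' -> path_rel (loop_rev a) (loop_rev a').
Proof.
move=> [[p hp] /= [pa pb]]; exists (exist _ _ (pcont_comp hp (loop_rev_pcont (x0 := x0)))).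
by rewrite /= pa pb.
Qed.

Lemma pi0_mul_proj (a b : Om) : pi0_mul (q a) (q b) = q (loop_cat a b).
Proof. by rewrite /pi0_mul; apply: pi0_proj_path; apply: path_rel_cat; exact: path_rel_repr. Qed.

Lemma pi0_inv_proj (a : Om) : pi0_inv (q a) = q (loop_rev a).
Proof. by rewrite /pi0_inv; apply: pi0_proj_path; apply: path_rel_rev; exact: path_rel_repr. Qed.

Lemma pi0_mulA (C D E : P) : pi0_mul C (pi0_mul D E) = pi0_mul (pi0_mul C D) E.
Proof.
rewrite -(pi0_reprK C) -(pi0_reprK D) -(pi0_reprK E) !pi0_mul_proj.
by apply: pi0_proj_path; apply: path_rel_sym; exact: loop_cat_assoc_path.
Qed.

Lemma pi0_mul1 (C : P) : pi0_mul pi0_one C = C /\ pi0_mul C pi0_one = C.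
Proof.
rewrite -(pi0_reprK C) !pi0_mul_proj.
by split; apply: pi0_proj_path; [exact: loop_cst_cat_path | exact: loop_cat_cst_path].
Qed.

Lemma pi0_mulV (C : P) : pi0_mul (pi0_inv C) C = pi0_one /\ pi0_mul C (pi0_inv C) = pi0_one.
Proof.
rewrite -(pi0_reprK C) pi0_inv_proj !pi0_mul_proj.
by split; apply: pi0_proj_path; [exact: loop_rev_cat_path | exact: loop_cat_rev_path].
Qed.

Lemma pi0_loop_ops_ok : loop_ops_ok pi0_mul pi0_inv.
Proof.
split; [|split; [|split]].
- by move=> l l'; exists (loop_cat l l').
- by move=> l; exists (loop_rev l).
- by move=> l l' m e; rewrite pi0_mul_proj; congr q; apply: loop_fun_inj; rewrite e.
- by move=> l m e; rewrite pi0_inv_proj; congr q; apply: loop_fun_inj; rewrite e.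
Qed.

Lemma pi0_ps_group : ps_group (G := pi0_ps Om) pi0_mul pi0_inv pi0_one.
Proof.
split; first exact: pi0_ps_pseudo hOm.
split; first exact: pi0_mulA.
split; first exact: pi0_mul1.
split; first exact: pi0_mulV.
split.
- apply: (pcont_of_lift (lifts_conv_prod hOm hOm (pi0_ps_lifts hOm) (pi0_ps_lifts hOm))) => /=.
  have -> : (fun a : Om * Om => pi0_mul (q a.1) (q a.2)) = (fun a => q (loop_cat a.1 a.2)).
    by apply/funext => -[a b]; exact: pi0_mul_proj.
  exact: pcont_comp (loop_cat_pcont (x0 := x0)) (@pi0_ps_proj_pcont _).
- apply: (pcont_of_lift (pi0_ps_lifts hOm)).
  have -> : (fun a : Om => pi0_inv (q a)) = (fun a => q (loop_rev a)).
    by apply/funext => a; exact: pi0_inv_proj.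
  exact: pcont_comp (loop_rev_pcont (x0 := x0)) (@pi0_ps_proj_pcont _).
Qed.

End LoopGroup.

(** * Epitopological spaces *)

(* The finest topology on [Y] in which [U] converges to [y]: every other point is isolated. *)
Definition conv_top (Y : Type) (U : set (set Y)) (y : Y) : Type := Y.

Section ConvTop.
Variables (Y : Type) (U : set (set Y)) (y : Y).

HB.instance Definition _ := gen_eqMixin (conv_top U y).
HB.instance Definition _ := gen_choiceMixin (conv_top U y).

Definition conv_top_nbhs (p : conv_top U y) : set (set (conv_top U y)) :=
  fun A => A p /\ (p = y -> is_ultrafilter U -> U A).

HB.instance Definition _ := hasNbhs.Build (conv_top U y) conv_top_nbhs.

Lemma conv_top_nbhs_filter (p : conv_top U y) : ProperFilter (conv_top_nbhs p).
Proof.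
apply: Build_ProperFilter; first by case.
split.
- by split => // _ hU; exact: is_filterT (ultra_filter hU).
- move=> A B [a ha] [b hb]; split => // e hU.
  exact: is_filterI (ultra_filter hU) (ha e hU) (hb e hU).
- move=> A B sAB [a ha]; split; first exact: sAB.
  by move=> e hU; apply: is_filterS (ultra_filter hU) sAB (ha e hU).
Qed.

Lemma conv_top_nbhs_singleton (p : conv_top U y) A : conv_top_nbhs p A -> A p.
Proof. by case. Qed.

Lemma conv_top_nbhs_nbhs (p : conv_top U y) A :
  conv_top_nbhs p A -> conv_top_nbhs p (conv_top_nbhs^~ A).
Proof.
move=> [a ha]; split=> [|e hU]; first by split.
by apply: is_filterS (ultra_filter hU) _ (ha e hU) => p' Ap'; split => // e' _; exact: ha.
Qed.

HB.instance Definition _ := Nbhs_isNbhsTopological.Build (conv_top U y)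
  conv_top_nbhs_filter conv_top_nbhs_singleton conv_top_nbhs_nbhs.

Lemma conv_top_fconv : is_ultrafilter U -> fconv (X := ps_of_top (conv_top U y)) U y.
Proof.
move=> hU V hV sUV; rewrite (ultra_maximal hU (ultra_filter hV) (ultra_neq0 hV) sUV).
by split => // A [_]; apply.
Qed.

End ConvTop.

Lemma conv_top_conv (Y : pstop) (U : set (set Y)) (y : Y) :
  pseudotopological Y -> ps_conv U y ->
  pcont (X := ps_of_top (conv_top U y)) (Y := Y) id.
Proof.
move=> [hY1 hY2] hUy V t [hV hn]; have hU := hY1 _ _ hUy.
case: (pselect (t = y)) => [ety|nty].
  subst t.
  have [sUV|/existsNP [A /not_implyP [hA nA]]] := pselect (U `<=` V).
    by rewrite (ultra_maximal hU (ultra_filter hV) (ultra_neq0 hV) sUV).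
  have hC : V (~` A) by case: (ultraVC A hV).
  have hyA : V ([set y] `|` A).
    by apply: hn; split=> [|_ _]; [left | apply: is_filterS (ultra_filter hU) _ hA => x; right].
  have hy : V [set y].
    by apply: is_filterS (ultra_filter hV) _ (is_filterI (ultra_filter hV) hyA hC) => x [[|]].
  by rewrite (ultra_principal hV hy); exact: hY2.
have hy : V [set t] by apply: hn; split.
by rewrite (ultra_principal hV hy); exact: hY2.
Qed.

Lemma ps_of_top_prodE (D T : topologicalType) (U : set (set (D * T)%type)) (p : D * T) :
  @ps_conv (ps_of_top (D * T)%type) U p <->
  @ps_conv (prod_space (ps_of_top D) (ps_of_top T)) U p.
Proof.
split=> [[hU hn]|[hU [[_ h1] [_ h2]]]]; split => //.
  split; split; try exact: push_ultra.
  - move=> A hA; apply: hn; exists (A, setT); last by move=> -[a b] [].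
    by split => //; exact: filterT.
  - move=> B hB; apply: hn; exists (setT, B); last by move=> -[a b] [].
    by split => //; exact: filterT.
move=> N [[A B] /= [hA hB] sN].
by apply: is_filterS (ultra_filter hU) _ (is_filterI (ultra_filter hU) (h1 A hA) (h2 B hB)).
Qed.

Lemma pcont_top_fst (D T : topologicalType) :
  pcont (X := ps_of_top (D * T)%type) (Y := ps_of_top D) fst.
Proof. by move=> U p /ps_of_top_prodE /pcont_fst. Qed.

Lemma pcont_top_snd (D T : topologicalType) :
  pcont (X := ps_of_top (D * T)%type) (Y := ps_of_top T) snd.
Proof. by move=> U p /ps_of_top_prodE /pcont_snd. Qed.

Lemma fconv_top_prod (D T : topologicalType) (G : set (set D)) (H : set (set T)) d t :
  is_filter G -> is_filter H ->
  fconv (X := ps_of_top D) G d -> fconv (X := ps_of_top T) H t ->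
  fconv (X := ps_of_top (D * T)%type) (prod_filter G H) (d, t).
Proof.
move=> hG hH hGd hHt V hV sV; apply/ps_of_top_prodE.
exact: (@fconv_prod (ps_of_top D) (ps_of_top T) G H d t hG hH hGd hHt V hV sV).
Qed.

Section FunSpaceEpi.
Variables (Y Z : pstop) (J : Type) (D C : J -> topologicalType).
Variable g : forall j, Z -> fun_space (ps_of_top (D j)) (ps_of_top (C j)).
Hypothesis hY : pseudotopological Y.
Hypothesis hg : forall U z, ps_conv U z <->
  (is_ultrafilter U /\ forall j, @ps_conv _ (pushforward (g j) U) (g j z)).

(* [Z^Y] is initial for the maps [f |-> ((d, t) |-> g_j (f t) d)] into
   [C_j^(D_j * conv_top U y)], one for each [j] and each convergence [U --> y] in [Y]. *)
Definition epi_index := {j : J & {p : set (set Y) * Y | ps_conv p.1 p.2}}.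

Definition epi_dom (k : epi_index) : topologicalType :=
  (D (projT1 k) * conv_top (proj1_sig (projT2 k)).1 (proj1_sig (projT2 k)).2)%type.

Definition epi_eval (k : epi_index) (w : fun_space Y Z * epi_dom k) : C (projT1 k) :=
  proj1_sig (g (projT1 k) (proj1_sig w.1 w.2.2)) w.2.1.

Lemma epi_eval_pcont k :
  pcont (X := prod_space (fun_space Y Z) (ps_of_top (epi_dom k))) (Y := ps_of_top _) (@epi_eval k).
Proof.
have hS := prod_pseudo (fun_space_pseudo Y Z) (top_pseudo (epi_dom k)).
have hk := proj2_sig (projT2 k).
have h2 : pcont (X := prod_space (fun_space Y Z) (ps_of_top (epi_dom k))) (Y := Y)
    (fun w => w.2.2).
  exact: pcont_comp (@pcont_snd _ _) (pcont_comp (@pcont_top_snd _ _) (conv_top_conv hY hk)).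
have hz : pcont (X := prod_space (fun_space Y Z) (ps_of_top (epi_dom k)))
    (fun w => proj1_sig w.1 w.2.2).
  exact: pcont_comp (pcont_pair hS (@pcont_fst _ _) h2) (@pcont_eval _ _).
have hgz : pcont (X := prod_space (fun_space Y Z) (ps_of_top (epi_dom k)))
    (fun w => g (projT1 k) (proj1_sig w.1 w.2.2)).
  by apply: pcont_comp hz _ => U z /hg [_]; apply.
have h1 : pcont (X := prod_space (fun_space Y Z) (ps_of_top (epi_dom k)))
    (Y := ps_of_top (D (projT1 k))) (fun w => w.2.1).
  exact: pcont_comp (@pcont_snd _ _) (@pcont_top_fst _ _).
exact: pcont_comp (pcont_pair hS hgz h1) (@pcont_eval _ _).
Qed.

Definition epi_map (k : epi_index) :
    fun_space Y Z -> fun_space (ps_of_top (epi_dom k)) (ps_of_top (C (projT1 k))) :=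
  curry_map (fun_space_pseudo Y Z) (top_pseudo _) (@epi_eval_pcont k).

Lemma fun_space_conv_of_epi_map (F : set (set (fun_space Y Z))) (f : fun_space Y Z) :
  is_ultrafilter F -> (forall k, ps_conv (pushforward (@epi_map k) F) (@epi_map k f)) ->
  ps_conv F f.
Proof.
move=> hF hk; split => // G t hG hGt K hK sK.
have [W [hW [sW eW]]] := ultra_lift (prod_filter_filter (ultra_filter hF) hG) hK sK.
have eF := ultra_prod_fst hF hG hW sW.
have cW : ps_conv (pushforward snd W) t.
  by apply: hGt; [exact: push_ultra | move=> B /(prod_filter_snd (ultra_filter hF)) /sW].
apply/hg; split => // j; split=> [|G' d hG' hG'd K' hK' sK']; first exact: push_ultra.
pose k : epi_index := existT _ j (exist _ (pushforward snd W, t) cW).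
have hWt := push_filter snd (ultra_filter hW).
have hG'' := @fconv_top_prod (D j) (conv_top (pushforward snd W) t) G' (pushforward snd W) d t
  hG' hWt hG'd (@conv_top_fconv _ (pushforward snd W) t (push_ultra snd hW)).
apply: ((hk k).2 _ (d, t) (prod_filter_filter hG' hWt) hG'' _ hK').
move=> S [A [B [hA [[B1 [B2 [hB1 [hB2 sB]]]] s]]]]; apply: sK'.
exists [set phi | forall d', B1 d' -> S (proj1_sig phi d')], B1; split; last first.
  by split => // -[phi d'] [/= hphi Bd']; exact: hphi.
rewrite -eW; rewrite -eF in hA.
apply: is_filterS (ultra_filter hW) _ (is_filterI (ultra_filter hW) hA hB2).
move=> [f' t'] [/= Af' Bt'] d' Bd'.
exact: (s (@epi_map k f', (d', t')) (conj Af' (sB (d', t') (conj Bd' Bt')))).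
Qed.

End FunSpaceEpi.

Lemma fun_space_epi (Y Z : pstop) : pseudotopological Y -> epitopological Z ->
  epitopological (fun_space Y Z).
Proof.
move=> hY [J [D [C [g hg]]]].
exists (epi_index Y J), (@epi_dom Y J D), (fun k => C (projT1 k)),
  (fun k => @epi_map Y Z J D C g hY hg k).
move=> F f; split=> [hFf|[hF hk]]; last exact: fun_space_conv_of_epi_map.
by split=> [|k]; [case: hFf | exact: pcont_curry].
Qed.

Lemma epitopological_initial (A : Type) (Z : pstop) (h : A -> Z) : epitopological Z ->
  epitopological (@PsTop A (fun V a => is_ultrafilter V /\ ps_conv (pushforward h V) (h a))).
Proof.
move=> [J [Y [T [f hf]]]]; exists J, Y, T, (fun j a => f j (h a)) => U x /=; split.
  by move=> [hU /hf [_ hc]].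
by move=> [hU hj]; split => //; apply/hf; split => //; exact: push_ultra.
Qed.

Record epi_presentation (X : pstop) : Type := EpiPresentation {
  ep_index : Type;
  ep_dom : ep_index -> topologicalType;
  ep_cod : ep_index -> topologicalType;
  ep_map : forall j, X -> fun_space (ps_of_top (ep_dom j)) (ps_of_top (ep_cod j));
  ep_convE : forall U x, ps_conv U x <->
    (is_ultrafilter U /\ forall j, @ps_conv _ (pushforward (ep_map j) U) (ep_map j x)) }.

Lemma epi_presentation_of (X : pstop) : epitopological X -> epi_presentation X.
Proof.
by case/cid => J /cid [Y /cid [Z /cid [f hf]]]; exact: EpiPresentation hf.
Qed.

Lemma epitopological_meet (P : Type) (adm : (set (set P) -> P -> Prop) -> Prop) :
  (exists c, adm c) -> (forall c, adm c -> epitopological (PsTop c)) ->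
  epitopological (@PsTop P (fun U z => forall c, adm c -> c U z)).
Proof.
move=> [c0 h0] he.
pose E (c : {c | adm c}) := epi_presentation_of (he _ (proj2_sig c)).
exists {c : {c | adm c} & ep_index (E c)}, (fun k => @ep_dom _ (E (projT1 k)) (projT2 k)),
  (fun k => @ep_cod _ (E (projT1 k)) (projT2 k)), (fun k => @ep_map _ (E (projT1 k)) (projT2 k)).
move=> U z; split.
  move=> h; split; first by have /(@ep_convE _ (E (exist _ c0 h0))) [] := h c0 h0.
  by move=> [[c hc] j]; have /(@ep_convE _ (E (exist _ c hc))) [_] := h c hc; apply.
move=> [hU hj] c hc; apply/(@ep_convE _ (E (exist _ c hc))); split => // j.
exact: (hj (existT _ (exist _ c hc) j)).
Qed.

Section Pi0Epi.
Variable A : pstop.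
Hypothesis hA : pseudotopological A.
Local Notation P := (pi0car A).

Definition pi0_epi_adm (c : set (set P) -> P -> Prop) : Prop :=
  pseudotopological (PsTop c) /\ epitopological (PsTop c) /\
  pcont (X := A) (Y := PsTop c) (@pi0_proj A).

Lemma pi0_epiE : pi0_epi A = PsTop (fun U z => forall c, pi0_epi_adm c -> c U z).
Proof.
congr PsTop; apply/funext => U; apply/funext => z; apply/propext.
by split=> [h c [h1 [h2 h3]]|h c h1 h2 h3]; [exact: h | exact: h].
Qed.

Lemma pi0_epi_adm_ultra : pi0_epi_adm (fun U _ => is_ultrafilter U).
Proof.
split; [|split].
- by split => // x; exact: principal_ultra.
- by exists False, (fun j : False => match j with end), (fun j : False => match j with end),
    (fun j : False => match j with end) => U x; split=> [|[]] //; split => // [[]].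
- by move=> V a hV; exact: push_ultra (hA.1 _ _ hV).
Qed.

Lemma pi0_epi_pseudo : pseudotopological (pi0_epi A).
Proof.
split=> [U z h|z c [_ h] _ _]; last exact: h.
exact: h _ (pi0_epi_adm_ultra.1) (pi0_epi_adm_ultra.2.1) (pi0_epi_adm_ultra.2.2).
Qed.

Lemma pi0_epi_epi : epitopological (pi0_epi A).
Proof.
rewrite pi0_epiE; apply: epitopological_meet.
  by exists (fun U _ => is_ultrafilter U); exact: pi0_epi_adm_ultra.
by move=> c [_ []].
Qed.

Lemma pi0_epi_proj_pcont : pcont (Y := pi0_epi A) (@pi0_proj A).
Proof. by move=> V a hV c _ _ hq; exact: hq. Qed.

Lemma pi0_epi_pcont (Z : pstop) (h : P -> Z) : pseudotopological Z -> epitopological Z ->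
  pcont (fun a => h (pi0_proj a)) -> pcont (X := pi0_epi A) h.
Proof.
move=> hZ eZ hh U z hU.
pose c V b := is_ultrafilter V /\ ps_conv (pushforward h V) (h b).
suff [//] : c U z.
apply: hU.
- by split=> [V b [] //|b]; split; [exact: principal_ultra | exact: hZ.2].
- exact: epitopological_initial.
- by move=> V a hV; split; [exact/push_ultra/(hA.1 _ _ hV) | exact: hh].
Qed.

End Pi0Epi.

Section LoopGroupEpi.
Variables (X : pstop) (x0 : X).
Hypothesis hX : pseudotopological X.
Local Notation Om := (loop_space x0).
Local Notation Pe := (pi0_epi Om).
Local Notation q := (@pi0_proj Om).
Local Notation hOm := (loop_space_pseudo x0).
Local Notation hPe := (pi0_epi_pseudo hOm).
Local Notation ePe := (pi0_epi_epi hOm).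

Lemma pi0_epi_inv_pcont : pcont (X := Pe) (Y := Pe) (@pi0_inv X x0).
Proof.
apply: (pi0_epi_pcont hOm hPe ePe).
have -> : (fun a => pi0_inv (q a)) = (fun a => q (loop_rev a)).
  by apply/funext => a; exact: pi0_inv_proj.
exact: pcont_comp (loop_rev_pcont (x0 := x0)) (@pi0_epi_proj_pcont Om).
Qed.

Lemma cat_swap_pcont : pcont (X := prod_space Om Om) (Y := Pe) (fun p => q (loop_cat p.2 p.1)).
Proof.
have hcat := pcont_comp (loop_cat_pcont (x0 := x0)) (@pi0_epi_proj_pcont Om).
exact: pcont_comp (pcont_swap hOm hOm) hcat.
Qed.

(* [mul_right b = fun l => [l] * b] and [mul_left a = fun b => a * b]. *)
Definition mul_right (b : Pe) : fun_space Om Pe := curry_map hOm hOm cat_swap_pcont (pi0_repr b).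

Lemma mul_right_pcont : pcont (X := Pe) mul_right.
Proof.
apply: (pi0_epi_pcont hOm (fun_space_pseudo _ _) (fun_space_epi hOm ePe)).
suff -> : (fun b => mul_right (q b)) = curry_map hOm hOm cat_swap_pcont by exact: pcont_curry.
apply/funext => b; apply: sig_inj; apply/funext => a /=.
by apply: pi0_proj_path; apply: path_rel_cat; [exact: (path_rel_refl hOm) | exact: path_rel_repr].
Qed.

Lemma cat_left_pcont : pcont (X := prod_space Om Pe) (fun p => proj1_sig (mul_right p.2) p.1).
Proof. exact: pcont_comp (pcont_swap hOm hPe) (pcont_uncurry mul_right_pcont). Qed.

Definition mul_left (a : Pe) : fun_space Pe Pe := curry_map hOm hPe cat_left_pcont (pi0_repr a).

Lemma mul_left_pcont : pcont (X := Pe) mul_left.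
Proof.
apply: (pi0_epi_pcont hOm (fun_space_pseudo _ _) (fun_space_epi hPe ePe)).
suff -> : (fun a => mul_left (q a)) = curry_map hOm hPe cat_left_pcont by exact: pcont_curry.
apply/funext => a; apply: sig_inj; apply/funext => b /=.
by apply: pi0_proj_path; apply: path_rel_cat; [exact: path_rel_repr | exact: (path_rel_refl hOm)].
Qed.

Lemma pi0_epi_group : epi_group (G := Pe) (@pi0_mul X x0) (@pi0_inv X x0) (pi0_one x0 hX).
Proof.
split; last exact: ePe.
split; first exact: hPe.
split; first exact: pi0_mulA.
split; first exact: pi0_mul1.
split; first exact: pi0_mulV.
split; last exact: pi0_epi_inv_pcont.
exact: pcont_uncurry mul_left_pcont.
Qed.

End LoopGroupEpi.

Theorem mainTheorem11 :
  (forall (X : pstop) (x0 : X), pseudotopological X ->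
     exists (mul : pi0car (loop_space x0) -> pi0car (loop_space x0) -> pi0car (loop_space x0))
            (inv : pi0car (loop_space x0) -> pi0car (loop_space x0))
            (e : pi0car (loop_space x0)),
       loop_ops_ok mul inv /\
       ps_group (G := pi0_ps (loop_space x0)) mul inv e)
  /\
  (forall (X : pstop) (x0 : X), pseudotopological X -> epitopological X ->
     exists (mul : pi0car (loop_space x0) -> pi0car (loop_space x0) -> pi0car (loop_space x0))
            (inv : pi0car (loop_space x0) -> pi0car (loop_space x0))
            (e : pi0car (loop_space x0)),
       loop_ops_ok mul inv /\
       epi_group (G := pi0_epi (loop_space x0)) mul inv e).
Proof.
split=> [X x0 hX|X x0 hX _]; exists (@pi0_mul X x0), (@pi0_inv X x0), (pi0_one x0 hX);
  split; try exact: pi0_loop_ops_ok.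
- exact: pi0_ps_group.
- exact: pi0_epi_group.
Qed.
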